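(* Let $E$ be a real Banach space, $K\subset E$ nonempty closed convex, $Y$ a real Banach space containing a closed, convex, pointed cone $C$ with nonempty interior, $f:E\times E\to Y$, $T:K\to\mathcal P(K)$, and $g\in\mathcal F$ satisfying H1–H4, with B1–B4 holding. For Algorithm SEML, at any iteration $k$ at which $v^k$ is defined and the algorithm does not stop: (i) $\ell(k)$ is well defined (the Armijo-type search for $\alpha_k$ terminates after finitely many steps), and consequently $y^k$ is well defined; (ii) if $x^k\neq z^k$, then $f(y^k,x^k)\notin-C$.
   Context: $C^+=\{z\in Y^*:\langle y,z\rangle\ge0\ \forall y\in C\}$; $y\preceq y'$ iff $y'-y\in C$; $C$-convex: $G(tx+(1-t)y)\preceq tG(x)+(1-t)G(y)$. $\mathcal F$: functions $g:E\to\mathbb R$ strictly convex, lower semicontinuous, Gâteaux differentiable with derivative $g'$. $D_g(x,y)=g(x)-g(y)-\langle x-y,g'(y)\rangle$; $v_g(x,t)=\inf\{D_g(y,x):\|y-x\|=t\}$. H1: level sets of $D_g(x,\cdot)$ bounded; H2: $\inf_{x\in A}v_g(x,t)>0$ for $t>0$, bounded $A$; H3: $g'$ uniformly continuous on bounded sets; H4: $\lim_{\|x\|\to\infty}(g(x)-\rho\|x-z\|)=\infty$ for all $z$, $\rho>0$. $\Pi^g_D(x)$: unique minimizer of $D_g(\cdot,x)$ over nonempty closed convex $D$. B1: $f(x,x)=0$. B2: $f$ uniformly continuous on bounded subsets of $E\times E$. B3: $f(x,\cdot)$ $C$-convex. B4: $T$ has nonempty closed convex values, is demiclosed ($x^k\rightharpoonup\bar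 x$, $d(x^k,T(x^k))\to0\Rightarrow\bar x\in T(\bar x)$), lower semicontinuous at each $\bar x\in K$ ($x^k\to\bar x$, $\bar y\in T(\bar x)\Rightarrow\exists y^k\in T(x^k)$, $y^k\to\bar y$), quasi $D_g$-nonexpansive ($S(x)=\Pi^g_{T(x)}(x)$ has a fixed point and $D_g(p,S(x))\le D_g(p,x)$ for all fixed points $p$ of $S$ and $x\in K$). $\mathrm{argmin}^C_w\{G(y):y\in Q\}$: $a\in Q$ with no $y\in Q$ such that $G(a)-G(y)\in\mathrm{int}(C)$. Algorithm SEML: parameters $v^0\in K$, $\delta,\theta\in(0,1)$, $\{\beta_k\}\subset[\hat\beta,\tilde\beta]$ with $0<\hat\beta\le\tilde\beta$, $\{\gamma_k\}\subset[\varepsilon,1]$, $\varepsilon\in(0,1]$, $\{e^k\}\subset\mathrm{int}(C)$, $e^k\to\bar e\in\mathrm{int}(C)$. Given $v^k$: $x^k=\Pi^g_{T(v^k)}(v^k)$; $z^k\in\mathrm{argmin}^C_w\{\beta_kf(x^k,y)+g(y)e^k-\langle y,g'(x^k)\rangle e^k:y\in T(v^k)\}$; stop if $z^k=v^k$; else $\ell(k)=\min\{\ell\ge0:-\beta_kf(y^\ell,x^k)+\beta_kf(y^\ell,z^k)+\delta D_g(z^k,x^k)e^k\notin\mathrm{int}(C)\}$, $y^\ell=\theta^\ell z^k+(1-\theta^\ell)x^k$; $\alpha_k=\theta^{\ell(k)}$; $y^k=\alpha_kz^k+(1-\alpha_k)x^k$; $H_k=\{y:f(y^k,y)\in-C\}$;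 $K_0=K\cap H_0$, $K_k=K_{k-1}\cap H_k$; $w^k=\Pi^g_{K_k}(x^k)$; $v^{k+1}=\Pi^g_{L_k\cap M_k\cap N_k}(v^0)$ with $L_k=\{z:\langle z-x^k,g'(x^k)-g'(w^k)\rangle\le-\gamma_kD_g(x^k,w^k)\}$, $M_k=\{z:\langle z-v^k,g'(v^k)-g'(x^k)\rangle\le-\gamma_kD_g(v^k,x^k)\}$, $N_k=\{z:\langle z-v^k,g'(v^0)-g'(v^k)\rangle\le0\}$. *)

From HB Require Import structures.
From mathcomp Require Import all_boot all_order all_algebra.
From mathcomp Require Import all_classical all_reals all_analysis.
Import Order.TTheory GRing.Theory Num.Theory.
Import numFieldNormedType.Exports.
Local Open Scope classical_set_scope.
Local Open Scope ring_scope.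

Set Implicit Arguments.
Unset Strict Implicit.
Unset Printing Implicit Defensive.

Definition cvx_set {R : realType} {V : normedModType R} (A : set V) : Prop :=
  forall (x y : V) (t : R), A x -> A y -> 0 <= t <= 1 ->
    A (t *: x + (1 - t) *: y).

Definition bnd {R : realType} {V : normedModType R} (A : set V) : Prop :=
  exists M : R, forall y, A y -> `|y| <= M.

Definition is_clin {R : realType} {V : normedModType R} (phi : V -> R) : Prop :=
  (forall (a : R) (u v : V), phi (a *: u + v) = a * phi u + phi v)
  /\ continuous phi.

Definition wcvg {R : realType} {V : normedModType R} (u : nat -> V) (x : V) : Prop :=
  forall phi : V -> R, is_clin phi -> (fun n => phi (u n)) @ \oo --> phi x.

Definition good_cone {R : realType} {Y : normedModType R} (C : set Y) : Prop :=
  [/\ closed C, cvx_set C,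
      (forall (t : R) (y : Y), 0 <= t -> C y -> C (t *: y)),
      (forall y, C y -> C (- y) -> y = 0)
    & exists y, interior C y].

(* G is C-convex: G(tx+(1-t)y) ≼ tG(x)+(1-t)G(y), with a ≼ b iff b - a ∈ C *)
Definition C_convex {R : realType} {E Y : normedModType R}
    (C : set Y) (G : E -> Y) : Prop :=
  forall (x y : E) (t : R), 0 <= t <= 1 ->
    C (t *: G x + (1 - t) *: G y - G (t *: x + (1 - t) *: y)).

Definition argminw {R : realType} {E Y : normedModType R}
    (C : set Y) (G : E -> Y) (Q : set E) (a : E) : Prop :=
  Q a /\ ~ (exists y, Q y /\ interior C (G a - G y)).

(* g' x is the Gateaux derivative of g at x; <y, g'(x)> is written g' x y *)
Definition class_F {R : realType} {E : normedModType R}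
    (g : E -> R) (g' : E -> E -> R) : Prop :=
  [/\
      (forall (x y : E) (t : R), x <> y -> 0 < t < 1 ->
          g (t *: x + (1 - t) *: y) < t * g x + (1 - t) * g y),
      (forall (x : E) (eps : R), 0 < eps -> \forall y \near x, g x - eps < g y),
      (forall x, is_clin (g' x))
    &
      (forall x h : E,
          (fun t : R => t^-1 * (g (x + t *: h) - g x)) @ (0 : R)^' --> g' x h)].

Definition Dg {R : realType} {E : normedModType R}
    (g : E -> R) (g' : E -> E -> R) (x y : E) : R :=
  g x - g y - g' y (x - y).

Definition H1 {R : realType} {E : normedModType R} (g : E -> R) (g' : E -> E -> R) :=
  forall (x : E) (r : R), bnd [set y | Dg g g' x y <= r].

(* inf_{x ∈ A} v_g(x,t) > 0, written out as a positive uniform lower bound *)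
Definition H2 {R : realType} {E : normedModType R} (g : E -> R) (g' : E -> E -> R) :=
  forall (A : set E) (t : R), bnd A -> 0 < t ->
    exists c : R, 0 < c /\
      forall x y, A x -> `|y - x| = t -> c <= Dg g g' y x.

(* g' uniformly continuous on bounded sets (w.r.t. the dual norm) *)
Definition H3 {R : realType} {E : normedModType R} (g : E -> R) (g' : E -> E -> R) :=
  forall (A : set E), bnd A -> forall eps : R, 0 < eps ->
    exists d : R, 0 < d /\
      forall x y, A x -> A y -> `|x - y| < d ->
        forall h, `|g' x h - g' y h| <= eps * `|h|.

Definition H4 {R : realType} {E : normedModType R} (g : E -> R) (g' : E -> E -> R) :=
  forall (z : E) (rho : R), 0 < rho -> forall M : R, exists N : R,
    forall x, N <= `|x| -> M <= g x - rho * `|x - z|.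

Definition is_bproj {R : realType} {E : normedModType R}
    (g : E -> R) (g' : E -> E -> R) (D : set E) (x p : E) : Prop :=
  D p /\ forall y, D y -> Dg g g' p x <= Dg g g' y x.

Definition B2 {R : realType} {E Y : normedModType R} (f : E -> E -> Y) : Prop :=
  forall (A : set E), bnd A -> forall eps : R, 0 < eps ->
    exists d : R, 0 < d /\
      forall x1 y1 x2 y2, A x1 -> A y1 -> A x2 -> A y2 ->
        `|x1 - x2| < d -> `|y1 - y2| < d -> `|f x1 y1 - f x2 y2| < eps.

Definition B4 {R : realType} {E : normedModType R}
    (K : set E) (T : E -> set E) (g : E -> R) (g' : E -> E -> R) : Prop :=
  [/\
      (forall x, K x -> [/\ T x !=set0, closed (T x), cvx_set (T x) & T x `<=` K]),
      (forall (u : nat -> E) (xb : E), (forall n, K (u n)) -> wcvg u xb ->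
         (forall eps : R, 0 < eps ->
            \forall n \near \oo, exists s, T (u n) s /\ `|u n - s| < eps) ->
         T xb xb),
      (forall xb, K xb -> forall u : nat -> E, (forall n, K (u n)) ->
         u @ \oo --> xb -> forall yb, T xb yb ->
         exists w : nat -> E, (forall n, T (u n) (w n)) /\ w @ \oo --> yb)
    &
      ((exists p, K p /\ is_bproj g g' (T p) p p) /\
       (forall p, K p -> is_bproj g g' (T p) p p ->
          forall x s, K x -> is_bproj g g' (T x) x s ->
            Dg g g' p s <= Dg g g' p x))].

Definition ypt {R : realType} {E : normedModType R} (theta : R) (x z : E) (l : nat) : E :=
  theta ^+ l *: z + (1 - theta ^+ l) *: x.

Definition armijo {R : realType} {E Y : normedModType R}
    (C : set Y) (f : E -> E -> Y) (g : E -> R) (g' : E -> E -> R)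
    (beta delta theta : R) (e : Y) (x z : E) (l : nat) : Prop :=
  ~ interior C (- (beta *: f (ypt theta x z l) x) + beta *: f (ypt theta x z l) z
                 + (delta * Dg g g' z x) *: e).

Definition zobj {R : realType} {E Y : normedModType R}
    (f : E -> E -> Y) (g : E -> R) (g' : E -> E -> R)
    (beta : R) (e : Y) (x : E) : E -> Y :=
  fun y => beta *: f x y + g y *: e - g' x y *: e.

(* the iterates v^0,...,v^k were produced by SEML: every iteration j < k was
   carried out completely (and did not stop), and the data at iteration k
   (v^k ∈ K, x^k, z^k with z^k ≠ v^k) were computed. *)
Definition seml_upto {R : realType} {E Y : normedModType R}
    (K : set E) (C : set Y) (f : E -> E -> Y) (T : E -> set E)
    (g : E -> R) (g' : E -> E -> R)
    (v0 : E) (delta theta : R) (beta gamma : nat -> R) (e : nat -> Y)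
    (v x z y w : nat -> E) (ell : nat -> nat) (k : nat) : Prop :=
  v 0%N = v0 /\
  (forall j : nat, (j <= k)%N ->
     [/\ K (v j),
         is_bproj g g' (T (v j)) (v j) (x j),
         argminw C (zobj f g g' (beta j) (e j) (x j)) (T (v j)) (z j)
       & z j <> v j]) /\
  (forall j : nat, (j < k)%N ->
     [/\ armijo C f g g' (beta j) delta theta (e j) (x j) (z j) (ell j),
         (forall l, (l < ell j)%N ->
            ~ armijo C f g g' (beta j) delta theta (e j) (x j) (z j) l),
         y j = ypt theta (x j) (z j) (ell j),
         is_bproj g g' [set u | K u /\ forall i, (i <= j)%N -> C (- f (y i) u)]
                  (x j) (w j)
       &
         is_bproj g g'
           [set u | [/\ g' (x j) (u - x j) - g' (w j) (u - x j)
                          <= - (gamma j * Dg g g' (x j) (w j)),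
                        g' (v j) (u - v j) - g' (x j) (u - v j)
                          <= - (gamma j * Dg g g' (v j) (x j))
                      & g' v0 (u - v j) - g' (v j) (u - v j) <= 0]]
           v0 (v j.+1)]).

From HB Require Import structures.
From mathcomp Require Import all_boot all_order all_algebra.
From mathcomp Require Import all_classical all_reals all_analysis.
From mathcomp Require Import ring lra.
Import Order.TTheory GRing.Theory Num.Theory.
Import numFieldNormedType.Exports.
Local Open Scope classical_set_scope.
Local Open Scope ring_scope.

(* (i) Testing the weak minimality of z against the feasible point x, where
   f(x,x) = 0, shows that beta f(x,z) + D_g(z,x) e is not in int C.  If z = x
   the Armijo test holds at l = 0.  Otherwise D_g(z,x) > 0 by strict convexity
   of g, so beta f(x,z) + delta D_g(z,x) e lies in the open set Y \ C; since
   y^l -> x and f is continuous, the Armijo expression converges to that point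
   and the test succeeds for l large.
   (ii) y = y^l = t z + (1 - t) x with t = theta^l, and f(y,y) = 0, so
   C-convexity of f(y,.) gives t f(y,z) + (1 - t) f(y,x) in C.  If also
   -f(y,x) is in C, then -beta f(y,x) + beta f(y,z) is in C, and adding
   delta D_g(z,x) e in int C puts the Armijo expression in int C,
   contradicting the test at l. *)

Section Cone.
Context {R : realType} {Y : normedModType R} {C : set Y}.
Hypothesis C_cvx : cvx_set C.
Hypothesis C_scale : forall (t : R) (y : Y), 0 <= t -> C y -> C (t *: y).

Lemma cone_add (a b : Y) : C a -> C b -> C (a + b).
Proof.
move=> Ca Cb.
have half01 : 0 <= (2^-1 : R) <= 1 by rewrite invr_ge0 ler0n invf_le1 ?ler1n.
have := C_scale 2 _ (ler0n _ 2) (C_cvx a b _ Ca Cb half01).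
have -> : 1 - 2^-1 = 2^-1 :> R by field.
by rewrite scalerDr !scalerA divff // !scale1r.
Qed.

Lemma interior_cone_add (a c : Y) : C a -> interior C c -> interior C (a + c).
Proof.
move=> Ca /nbhs_normP[r r0 ball_C]; apply/nbhs_normP; exists r => // y ac_y.
rewrite -(subrK a y) addrC; apply: cone_add => //; apply: ball_C.
by rewrite /ball_ /= opprB addrA [c + a]addrC.
Qed.

Lemma interior_cone_scale (s : R) (c : Y) :
  0 < s -> interior C c -> interior C (s *: c).
Proof.
move=> s0 /nbhs_normP[r r0 ball_C]; apply/nbhs_normP.
exists (s * r); first exact: mulr_gt0.
move=> y /= sc_y; rewrite -[y](scalerKV (lt0r_neq0 s0)).
apply: C_scale; first exact: ltW.
apply: ball_C; rewrite /ball_ /= -[c](scalerK (lt0r_neq0 s0)) -scalerBr.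
by rewrite normrZ gtr0_norm ?invr_gt0 // ltr_pdivrMl.
Qed.

End Cone.

Section ContinuousLinear.
Context {R : realType} {E : normedModType R} {phi : E -> R}.
Hypothesis phi_lin : is_clin phi.

Lemma clin0 : phi 0 = 0.
Proof.
have [lin _] := phi_lin; have := lin 1 0 0.
by rewrite scale1r addr0 mul1r -{1}[phi 0]add0r => /addIr.
Qed.

Lemma clinZ (a : R) (u : E) : phi (a *: u) = a * phi u.
Proof. by have [lin _] := phi_lin; have := lin a u 0; rewrite !addr0 clin0 addr0. Qed.

Lemma clinB (u v : E) : phi (u - v) = phi u - phi v.
Proof.
by have [lin _] := phi_lin; rewrite addrC -scaleN1r lin mulN1r addrC.
Qed.

End ContinuousLinear.

Section Bregman.
Context {R : realType} {E : normedModType R} {g : E -> R} {g' : E -> E -> R}.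
Hypothesis g_strict : forall (x y : E) (t : R), x <> y -> 0 < t < 1 ->
  g (t *: x + (1 - t) *: y) < t * g x + (1 - t) * g y.
Hypothesis g'_lin : forall x, is_clin (g' x).
Hypothesis g'_gateaux : forall x h : E,
  (fun t : R => t^-1 * (g (x + t *: h) - g x)) @ (0 : R)^' --> g' x h.

Lemma strict_convex_le (x y : E) (t : R) : 0 < t < 1 ->
  g (t *: x + (1 - t) *: y) <= t * g x + (1 - t) * g y.
Proof.
move=> t01; have [<-|xy] := pselect (x = y); last exact/ltW/g_strict.
by rewrite -scalerDl -mulrDl addrC subrK scale1r mul1r.
Qed.

Lemma gateaux_le_sub (x y : E) : g' x (y - x) <= g y - g x.
Proof.
suff : [set r | r <= g y - g x] (g' x (y - x)) by [].
have quot_cvg := cvg_dnbhs_at_right (g'_gateaux x (y - x)).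
apply: (closed_cvg (F := 0^'+) _ (@closed_le R _) _ _ quot_cvg).
near=> t.
have t0 : 0 < t by near: t; exact: nbhs_right_gt.
have t01 : 0 < t < 1 by rewrite t0; near: t; exact: nbhs_right_lt.
have -> : x + t *: (y - x) = t *: y + (1 - t) *: x.
  by rewrite scalerBr scalerBl scale1r addrCA addrA.
have le_g := strict_convex_le y x t t01.
by rewrite /= mulrC ler_pdivrMr // mulrC; lra.
Unshelve. all: by end_near.
Qed.

Lemma Dg_gt0 (z x : E) : z <> x -> 0 < Dg g g' z x.
Proof.
move=> zx; set m := 2^-1 *: z + (1 - 2^-1) *: x.
have half01 : 0 < (2^-1 : R) < 1 by rewrite invr_gt0 ltr0n invf_lt1 ?ltr1n.
have half : 1 - 2^-1 = 2^-1 :> R by field.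
have gm := g_strict _ _ _ zx half01; rewrite -/m half in gm.
have mx : m - x = 2^-1 *: (z - x).
  by rewrite /m scalerBl scale1r addrA addrAC addrK scalerBr.
have := gateaux_le_sub x m; rewrite mx (clinZ (g'_lin x)) /Dg; lra.
Qed.

Lemma Dg_xx (x : E) : Dg g g' x x = 0.
Proof. by rewrite /Dg !subrr (clin0 (g'_lin x)) subrr. Qed.

End Bregman.

Lemma B2_continuous_fst (R : realType) (E Y : normedModType R) (f : E -> E -> Y) :
  B2 f -> forall a c : E, {for a, continuous (f ^~ c)}.
Proof.
move=> f_ucont a c; apply/cvgrPdist_lt => eps eps0.
set A := [set w : E | `|w| <= `|a| + `|c| + 1].
have A_bnd : bnd A by exists (`|a| + `|c| + 1).
have A_a : A a by rewrite /A /=; have := normr_ge0 c; lra.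
have A_c : A c by rewrite /A /=; have := normr_ge0 a; lra.
have [d [d0 f_close]] := f_ucont A A_bnd eps eps0.
near=> w; apply: f_close => //; last by rewrite subrr normr0.
have aw : `|a - w| < 1 by near: w; exact: cvgr_dist_lt.
rewrite /A /=; have := ler_normD (w - a) a; rewrite subrK distrC.
by have := normr_ge0 c; lra.
Unshelve. all: by end_near.
Qed.

Section Armijo.
Context {R : realType} {E Y : normedModType R} {C : set Y}.
Context {f : E -> E -> Y} {g : E -> R} {g' : E -> E -> R}.
Hypothesis C_cvx : cvx_set C.
Hypothesis C_scale : forall (t : R) (y : Y), 0 <= t -> C y -> C (t *: y).
Hypothesis f_diag : forall u, f u u = 0.
Context {b delta theta : R} {e : Y} {x z : E}.
Hypotheses (b_gt0 : 0 < b) (delta_gt0 : 0 < delta) (theta01 : 0 < theta < 1).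
Hypothesis e_int : interior C e.

Lemma argminw_zobj_not_interior (Q : set E) :
  is_clin (g' x) -> Q x -> argminw C (zobj f g g' b e x) Q z ->
  ~ interior C (b *: f x z + Dg g g' z x *: e).
Proof.
move=> g'x_lin Qx [_ z_min] int_C; apply: z_min; exists x; split => //.
suff -> : zobj f g g' b e x z - zobj f g g' b e x x =
          b *: f x z + Dg g g' z x *: e by [].
rewrite /zobj /Dg f_diag scaler0 add0r (clinB g'x_lin) !scalerBl.
by rewrite !opprB !addrA [RHS]addrAC [LHS]addrAC; congr (_ + _); rewrite addrAC.
Qed.

Lemma armijo_not_descent (l : nat) :
  0 < Dg g g' z x -> C_convex C (f (ypt theta x z l)) ->
  armijo C f g g' b delta theta e x z l -> ~ C (- f (ypt theta x z l) x).
Proof.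
move=> D_gt0 f_cvx armijo_l descent; apply: armijo_l.
have [theta_gt0 theta_lt1] := andP theta01.
set t := theta ^+ l; set y := ypt theta x z l.
have t_gt0 : 0 < t := exprn_gt0 _ theta_gt0.
have t_le1 : t <= 1 := exprn_ile1 _ (ltW theta_gt0) (ltW theta_lt1).
have f_seg : C (t *: f y z + (1 - t) *: f y x).
  by have := f_cvx z x t; rewrite -/y f_diag subr0 ltW //= t_le1; apply.
have -> : - (b *: f y x) + b *: f y z =
          (b / t) *: (t *: f y z + (1 - t) *: f y x - f y x).
  rewrite scalerBr scalerDr !scalerA divfK ?gt_eqF // -addrA -scalerBl.
  rewrite (_ : b / t * (1 - t) - b / t = - b); last by field; rewrite gt_eqF.
  by rewrite scaleNr addrC.
apply: (interior_cone_add C_cvx C_scale).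
  by apply: C_scale; [rewrite divr_ge0 ?ltW | apply: (cone_add C_cvx C_scale)].
by apply: (interior_cone_scale C_scale) => //; exact: mulr_gt0.
Qed.

Lemma ypt_cvg : ypt theta x z l @[l --> \oo] --> x.
Proof.
have theta_pow : theta ^+ l @[l --> \oo] --> (0 : R).
  by apply: cvg_expr; case/andP: theta01 => t0 t1; rewrite gtr0_norm.
suff : ypt theta x z l @[l --> \oo] --> 0 *: z + (1 - 0) *: x.
  by rewrite scale0r add0r subr0 scale1r.
apply: cvgD; apply: cvgZ => //; try exact: cvg_cst.
exact: cvgB (cvg_cst _) theta_pow.
Qed.

Lemma armijo_eventually : closed C ->
  {for x, continuous (f ^~ x)} -> {for x, continuous (f ^~ z)} ->
  ~ C (b *: f x z + (delta * Dg g g' z x) *: e) ->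
  \forall l \near \oo, armijo C f g g' b delta theta e x z l.
Proof.
move=> C_closed fx_cont fz_cont not_C; set d := delta * Dg g g' z x.
have lim : - (b *: f (ypt theta x z l) x) + b *: f (ypt theta x z l) z + d *: e
             @[l --> \oo] --> b *: f x z + d *: e.
  rewrite -[b *: f x z]add0r -oppr0 -(scaler0 _ b) -(f_diag x).
  apply: cvgD; last exact: cvg_cst.
  apply: cvgD; first apply: cvgN.
  - apply: cvgZ; first exact: cvg_cst.
    exact: (continuous_cvg _ fx_cont ypt_cvg).
  - apply: cvgZ; first exact: cvg_cst.
    exact: (continuous_cvg _ fz_cont ypt_cvg).
near=> l => /interior_subset; near: l.
exact: lim _ (open_nbhs_nbhs (conj (closed_openC C_closed) not_C)).
Unshelve. all: by end_near.
Qed.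

Lemma armijo_exists : class_F g g' -> closed C -> delta < 1 ->
  {for x, continuous (f ^~ x)} -> {for x, continuous (f ^~ z)} ->
  ~ interior C (b *: f x z + Dg g g' z x *: e) ->
  exists l, armijo C f g g' b delta theta e x z l.
Proof.
move=> [g_strict _ g'_lin g'_gateaux] C_closed delta_lt1 fx_cont fz_cont not_int.
have [zx | zx] := pselect (z = x).
  exists 0%N; rewrite /armijo zx (Dg_xx g'_lin) mulr0 scale0r addr0 addNr.
  by move: not_int; rewrite zx (Dg_xx g'_lin) f_diag scaler0 scale0r addr0.
have D_gt0 := Dg_gt0 g_strict g'_lin g'_gateaux _ _ zx.
have not_C : ~ C (b *: f x z + (delta * Dg g g' z x) *: e).
  move=> C_pt; apply: not_int.
  have -> : Dg g g' z x = delta * Dg g g' z x + (1 - delta) * Dg g g' z x by ring.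
  rewrite scalerDl addrA; apply: (interior_cone_add C_cvx C_scale) => //.
  by apply: (interior_cone_scale C_scale) => //; rewrite pmulr_rgt0 // subr_gt0.
exact: filter_ex (armijo_eventually C_closed fx_cont fz_cont not_C).
Qed.

End Armijo.

Theorem proposition3p6 (R : realType) (E Y : completeNormedModType R)
  (K : set E) (C : set Y) (f : E -> E -> Y) (T : E -> set E)
  (g : E -> R) (g' : E -> E -> R)
  (v0 : E) (delta theta betahat betatilde eps : R)
  (beta gamma : nat -> R) (e : nat -> Y) (ebar : Y)
  (v x z y w : nat -> E) (ell : nat -> nat) (k : nat) :
  K !=set0 -> closed K -> cvx_set K ->
  good_cone C ->
  class_F g g' -> H1 g g' -> H2 g g' -> H3 g g' -> H4 g g' ->
  (forall u, f u u = 0) -> B2 f -> (forall u, C_convex C (f u)) -> B4 K T g g' ->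
  K v0 -> 0 < delta < 1 -> 0 < theta < 1 ->
  0 < betahat -> betahat <= betatilde ->
  (forall j, betahat <= beta j <= betatilde) ->
  0 < eps <= 1 -> (forall j, eps <= gamma j <= 1) ->
  (forall j, interior C (e j)) -> e @ \oo --> ebar -> interior C ebar ->
  seml_upto K C f T g g' v0 delta theta beta gamma e v x z y w ell k ->
  (exists l : nat, armijo C f g g' (beta k) delta theta (e k) (x k) (z k) l) /\
  (forall l : nat,
     armijo C f g g' (beta k) delta theta (e k) (x k) (z k) l ->
     (forall l', (l' < l)%N -> ~ armijo C f g g' (beta k) delta theta (e k) (x k) (z k) l') ->
     x k <> z k -> ~ C (- f (ypt theta (x k) (z k) l) (x k))).
Proof.
move=> _ _ _ [C_closed C_cvx C_scale _ _] gF _ _ _ _ f_diag f_ucont f_cvx _ _.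
have [g_strict _ g'_lin g'_gateaux] := gF.
move=> /andP[delta_gt0 delta_lt1] theta01 betahat_gt0 _ beta_bnd _ _ e_int _ _.
move=> [_ [iter_k _]]; have [_ [Tx _] z_min _] := iter_k k (leqnn k).
have beta_gt0 : 0 < beta k by case/andP: (beta_bnd k) => /(lt_le_trans betahat_gt0).
have not_int := argminw_zobj_not_interior f_diag _ (g'_lin _) Tx z_min.
split=> [|l armijo_l _ xz].
  apply: (armijo_exists C_cvx C_scale f_diag theta01 (e_int k) gF C_closed
           delta_lt1 _ _ not_int); exact: B2_continuous_fst.
have D_gt0 := Dg_gt0 g_strict g'_lin g'_gateaux _ _ (nesym xz).
exact: (armijo_not_descent C_cvx C_scale f_diag beta_gt0 delta_gt0 theta01
         (e_int k) _ D_gt0 (f_cvx _) armijo_l).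
Qed.
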